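(* In the bilocality scenario, let the two sources each prepare the singlet, $\rho=|\Psi^-_{AB_1}\rangle\langle\Psi^-_{AB_1}|\otimes|\Psi^-_{B_2C}\rangle\langle\Psi^-_{B_2C}|$, let $A$ and $C$ measure $A_0=C_0=(\sigma_z+\sigma_x)/\sqrt2$, $A_1=C_1=(\sigma_z-\sigma_x)/\sqrt2$, and let $B$ either (case 14) perform the complete Bell-state measurement on $B_1B_2$, or (case 22) choose $y\in\{0,1\}$ and measure the two-outcome observable $\mathcal B_y=(1-y)\,\sigma_z\otimes\sigma_z+y\,\sigma_x\otimes\sigma_x$. In the strong-eavesdropper scenario (a single eavesdropper who may act jointly on both sources), there is an eavesdropping strategy reproducing exactly the observed distribution $p(abc\mid xyz)$ for all settings, namely preparing $$\tilde\rho=\tfrac14\sum_{\psi\in\{\Phi^+,\Phi^-,\Psi^+,\Psi^-\}}|\psi_{AC}\rangle\langle\psi_{AC}|\otimes|\psi_{B_1B_2}\rangle\langle\psi_{B_1B_2}|$$ with the eavesdropper knowing $\psi$, which achieves guessing probability $3/8$ both for the outcomes $(a,b,c)$ at $x=z=0$ (and $y=0$ in case 22) and for $(a,c)$ at $x=z=0$. Consequently $H_{\min}(ABC\mid E)\le\log_2(8/3)\approx1.41$ and $H_{\min}(AC\mid E)\le\log_2(8/3)\approx1.41$ in both cases.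
   Context: Bell states: $|\Phi^\pm\rangle=(|00\rangle\pm|11\rangle)/\sqrt2$, $|\Psi^\pm\rangle=(|01\rangle\pm|10\rangle)/\sqrt2$; $\sigma_x,\sigma_z$ are Pauli matrices. The min-entropy is $H_{\min}=-\log_2P_{\mathrm{guess}}$, where $P_{\mathrm{guess}}$ is the maximal probability, over eavesdropper strategies allowed by the scenario that reproduce the observed statistics of $A,B,C$, that the eavesdropper's output equals the targeted outcomes; any particular such strategy lower-bounds $P_{\mathrm{guess}}$ and hence upper-bounds $H_{\min}$. *)

From HB Require Import structures.
From mathcomp Require Import all_boot all_order all_algebra all_field.
From mathcomp Require Import mxtens.
Set Implicit Arguments. Unset Strict Implicit. Unset Printing Implicit Defensive.
Import Order.TTheory GRing.Theory Num.Theory.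
Local Open Scope ring_scope.

Notation C := algC.

Definition dag {m n} (M : 'M[C]_(m, n)) : 'M[C]_(n, m) := map_mx (fun z => z^*) M^T.

Definition proj {n} (v : 'cV[C]_n) : 'M[C]_n := v *m dag v.

Definition e2 (i : 'I_2) : 'cV[C]_2 := delta_mx i 0.
Definition ket2 (i j : 'I_2) : 'cV[C]_(2 * 2) := e2 i *t e2 j.

Definition isqrt2 : C := (sqrtC 2)^-1.

Definition Phip : 'cV[C]_(2*2) := isqrt2 *: (ket2 0 0 + ket2 1 1).
Definition Phim : 'cV[C]_(2*2) := isqrt2 *: (ket2 0 0 - ket2 1 1).
Definition Psip : 'cV[C]_(2*2) := isqrt2 *: (ket2 0 1 + ket2 1 0).
Definition Psim : 'cV[C]_(2*2) := isqrt2 *: (ket2 0 1 - ket2 1 0).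

Definition bell (k : 'I_4) : 'cV[C]_(2*2) :=
  match val k with 0 => Phip | 1 => Phim | 2 => Psip | _ => Psim end.

Definition sz : 'M[C]_2 := \matrix_(i, j) (if i == j then (-1) ^+ i else 0).
Definition sx : 'M[C]_2 := \matrix_(i, j) (if i == j then 0 else 1).

Definition AC_obs (x : 'I_2) : 'M[C]_2 :=
  isqrt2 *: (sz + (-1) ^+ x *: sx).

(* Spectral projector of a +-1-valued observable O for outcome a
   (a = 0 <-> eigenvalue +1, a = 1 <-> eigenvalue -1) *)
Definition pm_proj {n} (O : 'M[C]_n.+1) (a : 'I_2) : 'M[C]_n.+1 :=
  2^-1 *: (1%:M + (-1) ^+ a *: O).

Definition Aproj (x a : 'I_2) : 'M[C]_2 := pm_proj (AC_obs x) a.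
Definition Cproj (z c : 'I_2) : 'M[C]_2 := pm_proj (AC_obs z) c.

(* Case 14: complete Bell-state measurement on B1B2 (no input: y : 'I_1) *)
Definition B14 (y : 'I_1) (b : 'I_4) : 'M[C]_(2*2) := proj (bell b).

Definition Bobs22 (y : 'I_2) : 'M[C]_(2*2) :=
  (1 - (y : nat)%:R) *: (sz *t sz) + (y : nat)%:R *: (sx *t sx).
Definition B22 (y b : 'I_2) : 'M[C]_(2*2) := pm_proj (Bobs22 y) b.

(* Four-qubit register ordered A, B1, B2, C (Kronecker order), dimension 16. *)
Definition ABC_op (MA : 'M[C]_2) (MB : 'M[C]_(2*2)) (MC : 'M[C]_2) : 'M[C]_16 :=
  MA *t MB *t MC.

Definition pABC (rho : 'M[C]_16) {ny nb} (Bm : 'I_ny -> 'I_nb -> 'M[C]_(2*2))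
  (x : 'I_2) (y : 'I_ny) (z : 'I_2) (a : 'I_2) (b : 'I_nb) (c : 'I_2) : C :=
  \tr (rho *m ABC_op (Aproj x a) (Bm y b) (Cproj z c)).

Definition pAC (rho : 'M[C]_16) (x z a c : 'I_2) : C :=
  \tr (rho *m ABC_op (Aproj x a) 1%:M (Cproj z c)).

Definition rho_true : 'M[C]_16 := proj Psim *t proj Psim.

Definition SWAP : 'M[C]_(2*2) :=
  \sum_(i < 2) \sum_(j < 2) ket2 i j *m (ket2 j i)^T.

(* Reordering unitary from register order (A,C,B1,B2) to (A,B1,B2,C):
   first swap factors 2,3 (-> A,B1,C,B2), then factors 3,4 (-> A,B1,B2,C). *)
Definition reorder : 'M[C]_16 :=
  ((1%:M : 'M[C]_(2*2)) *t SWAP : 'M[C]_16) *m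
  ((1%:M : 'M[C]_2) *t SWAP *t (1%:M : 'M[C]_2) : 'M[C]_16).

(* |psi_AC><psi_AC| (x) |psi_B1B2><psi_B1B2|, written in register order A,B1,B2,C *)
Definition sigma (k : 'I_4) : 'M[C]_16 :=
  reorder *m (proj (bell k) *t proj (bell k) : 'M[C]_16) *m dag reorder.

(* Eve's state: uniform mixture, Eve holding the classical label k *)
Definition rho_tilde : 'M[C]_16 := \sum_(k < 4) 4^-1 *: sigma k.

(* Eve's success probability for guessing (a,b,c) at x = z = 0, y = y0, when
   she guesses g k upon knowing the label k *)
Definition guessABC {ny nb} (Bm : 'I_ny -> 'I_nb -> 'M[C]_(2*2)) (y0 : 'I_ny)
  (g : 'I_4 -> 'I_2 * 'I_nb * 'I_2) : C :=
  \sum_(k < 4) 4^-1 * pABC (sigma k) Bm 0 y0 0 (g k).1.1 (g k).1.2 (g k).2.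

Definition guessAC (g : 'I_4 -> 'I_2 * 'I_2) : C :=
  \sum_(k < 4) 4^-1 * pAC (sigma k) 0 0 (g k).1 (g k).2.

Definition opt_value {T : Type} (f : T -> C) (p : C) : Prop :=
  (exists g, f g = p) /\ (forall g, f g <= p).

From HB Require Import structures.
From mathcomp Require Import all_boot all_order all_algebra all_field.
From mathcomp Require Import mxtens ring.
Set Implicit Arguments.
Unset Strict Implicit.
Unset Printing Implicit Defensive.

Import Order.TTheory GRing.Theory Num.Theory.
Local Open Scope ring_scope.

(* Entanglement swapping: up to a reordering of the qubits,
   |Psi-_{AB1}> |Psi-_{B2C}> = 1/2 sum_psi (+-) |psi_{AC}> |psi_{B1B2}>,
   the sum running over the four Bell states.  Both of B's measurements are
   diagonal in the Bell basis of B1B2, so the cross terms between different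
   psi never contribute, and the dephased mixture rho_tilde reproduces the
   statistics of rho_true.  Knowing psi, Eve faces at x = z = 0 a pair (a,c)
   that is perfectly correlated (Phi+), perfectly anticorrelated (Psi-), or
   uniform (Phi-, Psi+), while b is determined by psi; her best guess succeeds
   with probability 1/2, 1/2, 1/4, 1/4 respectively, 3/8 on average. *)

Lemma sqrtC2_mul : sqrtC 2 * sqrtC 2 = 2 :> C.
Proof. by rewrite -expr2 sqrtCK. Qed.

Lemma sqrtC2_neq0 : sqrtC 2 != 0 :> C.
Proof. by rewrite sqrtC_eq0 pnatr_eq0. Qed.

Lemma conj_isqrt2 : isqrt2^* = isqrt2.
Proof.
rewrite /isqrt2 fmorphV; congr (_^-1); apply/CrealP; apply: ger0_real.
by rewrite sqrtC_ge0 ler0n.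
Qed.

Lemma conj_half : (2^-1 : C)^* = 2^-1.
Proof. by rewrite fmorphV /= conjC_nat. Qed.

(* [field] only needs to know that sqrtC 2 squares to 2. *)
Ltac sqrt2_field :=
  let r := fresh "r" in let H := fresh "H" in let Hr := fresh "Hr" in
  rewrite /isqrt2; move: sqrtC2_mul sqrtC2_neq0; move: (sqrtC 2) => r H Hr;
  field: H; rewrite ?mulf_neq0 ?pnatr_eq0 ?expf_neq0 //.

Lemma dag_mul m n p (A : 'M[C]_(m, n)) (B : 'M[C]_(n, p)) :
  dag (A *m B) = dag B *m dag A.
Proof. by rewrite /dag trmx_mul map_mxM. Qed.

Lemma proj_tens m n (u : 'cV[C]_m) (w : 'cV[C]_n) :
  proj u *t proj w = proj (u *t w).
Proof.
rewrite /proj -tensmx_mul; congr (_ *m _).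
by apply/matrixP => i j; rewrite !mxE rmorphM.
Qed.

Lemma sum_delta n (F : 'I_n -> C) k : \sum_i (i == k)%:R * F i = F k.
Proof.
rewrite (bigD1 k) //= eqxx mul1r big1 ?addr0 // => i /negbTE ->.
by rewrite mul0r.
Qed.

Lemma mul_selection_mx n (M : 'M[C]_n) (f : 'I_n -> 'I_n) (v : 'cV[C]_n) :
  (forall i j, M i j = (j == f i)%:R) -> M *m v = \col_i v (f i) 0.
Proof.
move=> ME; apply/matrixP => i k; rewrite [k]ord1 !mxE.
under eq_bigr do rewrite ME.
exact: (sum_delta (fun j => v j 0)).
Qed.

Definition sparse_cV n (l : seq ('I_n * C)) : 'cV[C]_n :=
  \col_i \sum_(p <- l) p.2 * (i == p.1)%:R.

Lemma sum_sparse n (F : 'I_n -> C) (l : seq ('I_n * C)) (c : 'I_n * C -> C) :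
  \sum_i (\sum_(p <- l) c p * (i == p.1)%:R) * F i = \sum_(p <- l) c p * F p.1.
Proof.
under eq_bigr do rewrite big_distrl /=.
rewrite exchange_big /=; apply: eq_bigr => p _.
under eq_bigr do rewrite -mulrA.
by rewrite -big_distrr /= sum_delta.
Qed.

Lemma mxtrace_proj_sparse n (l : seq ('I_n * C)) (M : 'M[C]_n) :
  \tr (proj (sparse_cV l) *m M) =
  \sum_(p <- l) \sum_(q <- l) p.2 * q.2^* * M q.1 p.1.
Proof.
set v := sparse_cV l.
have vM i : \sum_j (v j 0)^* * M j i = \sum_(q <- l) q.2^* * M q.1 i.
  rewrite -(sum_sparse (M^~ i) l (fun q => q.2^*)); apply: eq_bigr => j _.
  rewrite mxE rmorph_sum; congr (_ * _); apply: eq_bigr => q _.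
  by rewrite rmorphM /= conjC_nat.
transitivity (\sum_i v i 0 * \sum_(q <- l) q.2^* * M q.1 i).
  apply: eq_bigr => i _; rewrite mxE -vM big_distrr /=; apply: eq_bigr => j _.
  by rewrite !mxE big_ord1 !mxE mulrA.
rewrite (eq_bigr (fun i => (\sum_(p <- l) p.2 * (i == p.1)%:R) *
                          \sum_(q <- l) q.2^* * M q.1 i)); last first.
  by move=> i _; rewrite mxE.
rewrite (sum_sparse _ _ (fun p => p.2)); apply: eq_bigr => p _.
by rewrite big_distrr /=; apply: eq_bigr => q _; rewrite mulrA.
Qed.

(* An index i < 16 of the register A,B1,B2,C has binary digits
   (a, b1, b2, c); the parities below read them off in a form that
   evaluates on numerals. *)
Definition regA (i : nat) : nat := odd i./2./2./2.
Definition regB (i : nat) : nat := (odd i./2./2).*2 + odd i./2.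
Definition regC (i : nat) : nat := odd i.

Lemma regA_lt (i : 'I_16) : (regA i < 2)%N. Proof. by rewrite /regA; case: odd. Qed.
Lemma regB_lt (i : 'I_16) : (regB i < 4)%N.
Proof. by rewrite /regB; case: odd; case: odd. Qed.
Lemma regC_lt (i : 'I_16) : (regC i < 2)%N. Proof. by rewrite /regC; case: odd. Qed.

Definition ordA (i : 'I_16) : 'I_2 := Ordinal (regA_lt i).
Definition ordB (i : 'I_16) : 'I_4 := Ordinal (regB_lt i).
Definition ordC (i : 'I_16) : 'I_2 := Ordinal (regC_lt i).

Lemma ABC_opE MA MB MC (i j : 'I_16) :
  ABC_op MA MB MC i j = MA (ordA i) (ordA j) * MB (ordB i) (ordB j) * MC (ordC i) (ordC j).
Proof.
have digitsE (k : 'I_16) :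
    [/\ (k %/ 2 %/ (2 * 2) = regA k)%N, (k %/ 2 %% (2 * 2) = regB k)%N
      & (k %% 2 = regC k)%N].
  by case: k => k lt_k; do 16 (case: k lt_k => [|k] lt_k; first by []).
rewrite /ABC_op !mxE; congr (MA _ _ * MB _ _ * MC _ _); apply: val_inj => /=;
  by case: (digitsE i) => ? ? ?; case: (digitsE j) => ? ? ?.
Qed.

Definition sz_entry (i j : nat) : C := if i == j then (-1) ^+ i else 0.
Definition sx_entry (i j : nat) : C := if i == j then 0 else 1.
Definition AC_proj_entry (x a i j : nat) : C :=
  2^-1 * ((i == j)%:R + (-1) ^+ a * (isqrt2 * (sz_entry i j + (-1) ^+ x * sx_entry i j))).

Lemma AprojE (x a i j : 'I_2) : Aproj x a i j = AC_proj_entry x a i j.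
Proof. by rewrite /Aproj /pm_proj /AC_obs !mxE. Qed.

Lemma CprojE (z c i j : 'I_2) : Cproj z c i j = AC_proj_entry z c i j.
Proof. by rewrite /Cproj /pm_proj /AC_obs !mxE. Qed.

Definition B22_entry (y b i j : nat) : C :=
  2^-1 * ((i == j)%:R + (-1) ^+ b *
    ((1 - y%:R) * (sz_entry i./2 j./2 * sz_entry (odd i) (odd j)) +
     y%:R * (sx_entry i./2 j./2 * sx_entry (odd i) (odd j)))).

Lemma B22E (y b : 'I_2) (i j : 'I_4) : B22 y b i j = B22_entry y b i j.
Proof.
rewrite /B22 /pm_proj /Bobs22 /B22_entry !mxE.
by case: i => [[|[|[|[|i]]]] hi] //; case: j => [[|[|[|[|j]]]] hj].
Qed.

(* sqrt 2 times the coordinates of Phi+, Phi-, Psi+, Psi- *)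
Definition bell_coord (k i : nat) : C :=
  match k, i with
  | 0, 0 => 1 | 0, 3 => 1 | 1, 0 => 1 | 1, 3 => -1
  | 2, 1 => 1 | 2, 2 => 1 | 3, 1 => 1 | 3, 2 => -1 | _, _ => 0 end.

Lemma bellE (k i : 'I_4) : bell k i 0 = isqrt2 * bell_coord k i.
Proof.
case: k => [[|[|[|[|k]]]] hk] //; case: i => [[|[|[|[|i]]]] hi] //;
  rewrite /bell /Phip /Phim /Psip /Psim /ket2 !mxE /=; ring.
Qed.

Definition B14_entry (b i j : nat) : C :=
  isqrt2 * isqrt2 * (bell_coord b i * bell_coord b j).

Lemma B14E y (b i j : 'I_4) : B14 y b i j = B14_entry b i j.
Proof.
rewrite /B14 /B14_entry /proj /dag mxE big_ord1 !mxE !bellE rmorphM /= conj_isqrt2.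
have -> : (bell_coord b j)^* = bell_coord b j.
  case: b => [[|[|[|[|]]]] ?] //=; case: j => [[|[|[|[|]]]] ?] //=;
  by rewrite ?rmorphN ?rmorph1 ?rmorph0.
ring.
Qed.

Lemma SWAPE (i j : 'I_4) : SWAP i j = (j == (odd i).*2 + odd i./2 :> nat)%:R.
Proof.
rewrite /SWAP summxE; under eq_bigr do rewrite summxE.
rewrite !big_ord_recl !big_ord0 !mxE !big_ord1 !mxE.
case: i => [[|[|[|[|i]]]] hi] //; case: j => [[|[|[|[|j]]]] hj] //=; ring.
Qed.

Definition swap_bits01 (n : nat) : nat :=
  (odd n./2./2./2).*2.*2.*2 + (odd n./2./2).*2.*2 + (odd n).*2 + odd n./2.
Definition swap_bits12 (n : nat) : nat :=
  (odd n./2./2./2).*2.*2.*2 + (odd n./2).*2.*2 + (odd n./2./2).*2 + odd n.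

Lemma swap_bits01_lt (i : 'I_16) : (swap_bits01 i < 16)%N.
Proof. by case: i => i h; do 16 (case: i h => [|i] h; first by []). Qed.
Lemma swap_bits12_lt (i : 'I_16) : (swap_bits12 i < 16)%N.
Proof. by case: i => i h; do 16 (case: i h => [|i] h; first by []). Qed.

Lemma reorderE (v : 'cV[C]_16) :
  reorder *m v = \col_i v (Ordinal (swap_bits12_lt (Ordinal (swap_bits01_lt i)))) 0.
Proof.
have swap01E (i j : 'I_16) :
    ((1%:M : 'M[C]_(2 * 2)) *t SWAP : 'M[C]_16) i j =
    (j == Ordinal (swap_bits01_lt i))%:R.
  rewrite mxE SWAPE !mxE -!natrM; congr (_%:R); rewrite -val_eqE /=.
  case: i => i h; do 16 (case: i h => [|i] h;
    [case: j => j hj; do 16 (case: j hj => [|j] hj; first by []); by [] |]).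
  by [].
have swap12E (i j : 'I_16) :
    ((1%:M : 'M[C]_2) *t SWAP *t (1%:M : 'M[C]_2) : 'M[C]_16) i j =
    (j == Ordinal (swap_bits12_lt i))%:R.
  rewrite -[_ i j]/(ABC_op 1%:M SWAP 1%:M i j) ABC_opE SWAPE !mxE -!natrM.
  congr (_%:R); rewrite -val_eqE /=.
  case: i => i h; do 16 (case: i h => [|i] h;
    [case: j => j hj; do 16 (case: j hj => [|j] hj; first by []); by [] |]).
  by [].
rewrite /reorder -mulmxA (mul_selection_mx _ swap12E) (mul_selection_mx _ swap01E).
by apply/matrixP => i k; rewrite !mxE.
Qed.

Lemma sigma_proj k : sigma k = proj (reorder *m (bell k *t bell k)).
Proof. by rewrite /sigma proj_tens /proj [X in _ = _ *m X]dag_mul !mulmxA. Qed.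

Definition hi_pair (n : nat) : nat := (odd n./2./2./2).*2 + odd n./2./2.
Definition lo_pair (n : nat) : nat := (odd n./2).*2 + odd n.
Lemma hi_pair_lt (i : 'I_16) : (hi_pair i < 4)%N.
Proof. by rewrite /hi_pair; case: odd; case: odd. Qed.
Lemma lo_pair_lt (i : 'I_16) : (lo_pair i < 4)%N.
Proof. by rewrite /lo_pair; case: odd; case: odd. Qed.

Lemma bell_tensE (k : 'I_4) (i : 'I_16) :
  (bell k *t bell k) i 0 =
  bell k (Ordinal (hi_pair_lt i)) 0 * bell k (Ordinal (lo_pair_lt i)) 0.
Proof.
rewrite mxE; congr (bell k _ _ * bell k _ _); apply: val_inj => /=;
  by case: i => i h; do 16 (case: i h => [|i] h; first by []).
Qed.

Local Notation "''o' n" := (@Ordinal 16 n isT) (at level 0, n at level 0).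

(* |Psi-_{AB1}> |Psi-_{B2C}> = (|0101> - |0110> - |1001> + |1010>) / 2 *)
Definition rho_true_coords : seq ('I_16 * C) :=
  [:: ('o 5, 2^-1); ('o 6, -2^-1); ('o 9, -2^-1); ('o 10, 2^-1)].

Definition sigma_coords (k : nat) : seq ('I_16 * C) :=
  match k with
  | 0 => [:: ('o 0, 2^-1); ('o 6, 2^-1); ('o 9, 2^-1); ('o 15, 2^-1)]
  | 1 => [:: ('o 0, 2^-1); ('o 6, -2^-1); ('o 9, -2^-1); ('o 15, 2^-1)]
  | 2 => [:: ('o 3, 2^-1); ('o 5, 2^-1); ('o 10, 2^-1); ('o 12, 2^-1)]
  | _ => [:: ('o 3, 2^-1); ('o 5, -2^-1); ('o 10, -2^-1); ('o 12, 2^-1)]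
  end.

Lemma rho_true_sparse : rho_true = proj (sparse_cV rho_true_coords).
Proof.
rewrite /rho_true proj_tens; congr proj.
apply/matrixP => i j; rewrite [j]ord1.
rewrite -[Psim]/(bell (@Ordinal 4 3 isT)) bell_tensE !bellE mxE.
rewrite /rho_true_coords !big_cons big_nil.
case: i => i h; do 16 (case: i h => [|i] h;
  [rewrite /hi_pair /lo_pair /=; sqrt2_field|]); by [].
Qed.

Lemma sigma_sparse (k : 'I_4) : sigma k = proj (sparse_cV (sigma_coords k)).
Proof.
rewrite sigma_proj reorderE; congr proj.
apply/matrixP => i j; rewrite [j]ord1 mxE bell_tensE !bellE mxE.
case: k => [[|[|[|[|k]]]] hk] //; rewrite /sigma_coords !big_cons big_nil;
case: i => i h; do 16 (case: i h => [|i] h;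
  [rewrite /hi_pair /lo_pair /=; sqrt2_field|]); by [].
Qed.

Lemma pABC_rho_tilde ny nb (Bm : 'I_ny -> 'I_nb -> 'M[C]_(2 * 2)) x y z a b c :
  pABC rho_tilde Bm x y z a b c = \sum_(k < 4) 4^-1 * pABC (sigma k) Bm x y z a b c.
Proof.
rewrite /pABC /rho_tilde mulmx_suml raddf_sum; apply: eq_bigr => k _.
by rewrite -scalemxAl; exact: mxtraceZ.
Qed.

Lemma pABC_sparse (l : seq ('I_16 * C)) ny nb (Bm : 'I_ny -> 'I_nb -> 'M[C]_(2 * 2))
    (fB : nat -> nat -> C) x y z a b c :
  (forall i j : 'I_4, Bm y b i j = fB i j) -> {in l, forall p, p.2^* = p.2} ->
  pABC (proj (sparse_cV l)) Bm x y z a b c =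
  \sum_(p <- l) \sum_(q <- l) p.2 * q.2 *
    (AC_proj_entry x a (regA q.1) (regA p.1) * fB (regB q.1) (regB p.1) *
     AC_proj_entry z c (regC q.1) (regC p.1)).
Proof.
move=> BmE l_real; rewrite /pABC mxtrace_proj_sparse.
apply: eq_bigr => p _; apply: eq_big_seq => q q_l.
by rewrite ABC_opE AprojE CprojE BmE l_real.
Qed.

Lemma real_coords4 (c1 c2 c3 c4 : C) (i1 i2 i3 i4 : 'I_16) :
  c1^* = c1 -> c2^* = c2 -> c3^* = c3 -> c4^* = c4 ->
  {in [:: (i1, c1); (i2, c2); (i3, c3); (i4, c4)], forall p, p.2^* = p.2}.
Proof. by move=> c1E c2E c3E c4E p; rewrite !inE => /or4P [] /eqP ->. Qed.

Lemma rho_true_coords_real : {in rho_true_coords, forall p, p.2^* = p.2}.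
Proof. by apply: real_coords4; rewrite ?rmorphN /= conj_half. Qed.

Lemma sigma_coords_real (k : 'I_4) : {in sigma_coords k, forall p, p.2^* = p.2}.
Proof.
by case: k => [[|[|[|[|k]]]] hk] //=; apply: real_coords4; rewrite ?rmorphN /= conj_half.
Qed.

Lemma sum_pairs4 (G : 'I_16 * C -> 'I_16 * C -> C) p1 p2 p3 p4 :
  \sum_(p <- [:: p1; p2; p3; p4]) \sum_(q <- [:: p1; p2; p3; p4]) G p q =
  G p1 p1 + G p1 p2 + G p1 p3 + G p1 p4 + G p2 p1 + G p2 p2 + G p2 p3 + G p2 p4 +
  G p3 p1 + G p3 p2 + G p3 p3 + G p3 p4 + G p4 p1 + G p4 p2 + G p4 p3 + G p4 p4.
Proof. by rewrite !big_cons !big_nil !addr0 !addrA. Qed.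

Ltac expand_entries :=
  rewrite !sum_pairs4 /= /AC_proj_entry /B14_entry /B22_entry /sz_entry /sx_entry
    /regA /regB /regC /=.

Lemma pABC_rho_tilde_B14 x y z a b c :
  pABC rho_tilde B14 x y z a b c = pABC rho_true B14 x y z a b c.
Proof.
rewrite pABC_rho_tilde rho_true_sparse !big_ord_recl big_ord0 !sigma_sparse.
rewrite !(pABC_sparse _ _ _ _ (B14E y b) (@sigma_coords_real _)).
rewrite (pABC_sparse _ _ _ _ (B14E y b) (@rho_true_coords_real)).
rewrite /sigma_coords /rho_true_coords /=; expand_entries.
by case: b => [[|[|[|[|b]]]] hb] //=; sqrt2_field.
Qed.

Lemma pABC_rho_tilde_B22 x y z a b c :
  pABC rho_tilde B22 x y z a b c = pABC rho_true B22 x y z a b c.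
Proof.
rewrite pABC_rho_tilde rho_true_sparse !big_ord_recl big_ord0 !sigma_sparse.
rewrite !(pABC_sparse _ _ _ _ (B22E y b) (@sigma_coords_real _)).
rewrite (pABC_sparse _ _ _ _ (B22E y b) (@rho_true_coords_real)).
by rewrite /sigma_coords /rho_true_coords /=; expand_entries; sqrt2_field.
Qed.

(* 8 p(a, c | psi_k) at x = z = 0, the Bell states being indexed
   Phi+, Phi-, Psi+, Psi-; B's outcome is k in case 14, and in case 22
   (y = 0) it is the parity of sz (x) sz, i.e. whether psi_k is a Psi state. *)
Definition weightAC (k a c : nat) : nat :=
  if k == 0 then (if a == c then 4 else 0)
  else if k == 3 then (if a == c then 0 else 4) else 2.
Definition weight14 (k a b c : nat) : nat := if b != k then 0 else weightAC k a c.
Definition weight22 (k a b c : nat) : nat :=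
  if b != (2 <= k)%N then 0 else weightAC k a c.
Definition max_weight (k : nat) : nat := if (k == 0) || (k == 3) then 4 else 2.

Lemma weightAC_le k a c : (weightAC k a c <= max_weight k)%N.
Proof. by rewrite /weightAC /max_weight; case: (k == 0); case: (k == 3); case: (a == c). Qed.
Lemma weight14_le k a b c : (weight14 k a b c <= max_weight k)%N.
Proof. by rewrite /weight14; case: ifP => _ //; apply: weightAC_le. Qed.
Lemma weight22_le k a b c : (weight22 k a b c <= max_weight k)%N.
Proof. by rewrite /weight22; case: ifP => _ //; apply: weightAC_le. Qed.

Lemma pABC_sigma_B14 (k : 'I_4) y a b c :
  pABC (sigma k) B14 0 y 0 a b c = (weight14 k a b c)%:R / 8%:R.
Proof.
rewrite sigma_sparse (pABC_sparse _ _ _ _ (B14E y b) (@sigma_coords_real k)).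
case: k => [[|[|[|[|k]]]] hk] //; rewrite /sigma_coords /=; expand_entries;
case: a => [[|[|a]] ha] //; case: c => [[|[|c]] hc] //;
case: b => [[|[|[|[|b]]]] hb] //; rewrite /weight14 /weightAC /=; sqrt2_field.
Qed.

Lemma pABC_sigma_B22 (k : 'I_4) a b c :
  pABC (sigma k) B22 0 0 0 a b c = (weight22 k a b c)%:R / 8%:R.
Proof.
rewrite sigma_sparse (pABC_sparse _ _ _ _ (B22E 0 b) (@sigma_coords_real k)).
case: k => [[|[|[|[|k]]]] hk] //; rewrite /sigma_coords /=; expand_entries;
case: a => [[|[|a]] ha] //; case: c => [[|[|c]] hc] //;
case: b => [[|[|b]] hb] //; rewrite /weight22 /weightAC /=; sqrt2_field.
Qed.

Lemma pAC_pABC rho x z a c :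
  pAC rho x z a c = pABC rho (fun _ _ : 'I_1 => 1%:M) x ord0 z a ord0 c.
Proof. by []. Qed.

Lemma pAC_sigma (k : 'I_4) a c : pAC (sigma k) 0 0 a c = (weightAC k a c)%:R / 8%:R.
Proof.
have idE (i j : 'I_4) : (1%:M : 'M[C]_(2 * 2)) i j = (i == j :> nat)%:R.
  by rewrite mxE.
rewrite pAC_pABC sigma_sparse.
apply: etrans (@pABC_sparse _ _ _ (fun _ _ => 1%:M) (fun i j => (i == j)%:R)
  0 ord0 0 a ord0 c idE (@sigma_coords_real k)) _.
case: k => [[|[|[|[|k]]]] hk] //; rewrite /sigma_coords /=; expand_entries;
case: a => [[|[|a]] ha] //; case: c => [[|[|c]] hc] //;
rewrite /weightAC /=; sqrt2_field.
Qed.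

Lemma opt_value_weights (T : Type) (f : T -> C) (w : 'I_4 -> T -> nat) (m : 'I_4 -> nat) :
  (forall g, f g = \sum_(k < 4) 4^-1 * ((w k g)%:R / 8%:R)) ->
  (forall k g, (w k g <= m k)%N) -> (exists g, forall k, w k g = m k) ->
  opt_value f (\sum_(k < 4) 4^-1 * ((m k)%:R / 8%:R)).
Proof.
move=> fE w_le [g0 g0E]; split.
  by exists g0; rewrite fE; apply: eq_bigr => k _; rewrite g0E.
move=> g; rewrite fE; apply: ler_sum => k _.
apply: ler_wpM2l; first by rewrite invr_ge0 ler0n.
by apply: ler_wpM2r; rewrite ?invr_ge0 ?ler0n ?ler_nat.
Qed.

Lemma max_weight_avg : \sum_(k < 4) 4^-1 * ((max_weight k)%:R / 8%:R) = 3%:R / 8%:R :> C.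
Proof. by rewrite !big_ord_recl big_ord0 /max_weight /=; field; rewrite ?pnatr_eq0. Qed.

Definition flag_Psim (k : 'I_4) : 'I_2 := if val k == 3 then ord_max else ord0.

Lemma opt_guessABC_B14 : opt_value (guessABC B14 ord0) (3%:R / 8%:R).
Proof.
rewrite -max_weight_avg.
apply: (opt_value_weights (w := fun k (g : 'I_4 -> 'I_2 * 'I_4 * 'I_2) => weight14 k (g k).1.1 (g k).1.2 (g k).2)).
- by move=> g; apply: eq_bigr => k _; rewrite pABC_sigma_B14.
- by move=> k g; apply: weight14_le.
- by exists (fun k : 'I_4 => (ord0, k, flag_Psim k)); case=> [[|[|[|[|k]]]] ?].
Qed.

Lemma opt_guessABC_B22 : opt_value (guessABC B22 0) (3%:R / 8%:R).
Proof.
rewrite -max_weight_avg.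
apply: (opt_value_weights (w := fun k (g : 'I_4 -> 'I_2 * 'I_2 * 'I_2) => weight22 k (g k).1.1 (g k).1.2 (g k).2)).
- by move=> g; apply: eq_bigr => k _; rewrite pABC_sigma_B22.
- by move=> k g; apply: weight22_le.
- exists (fun k : 'I_4 => (ord0, if (2 <= k)%N then ord_max else ord0, flag_Psim k)).
  by case=> [[|[|[|[|k]]]] ?].
Qed.

Lemma opt_guessAC : opt_value guessAC (3%:R / 8%:R).
Proof.
rewrite -max_weight_avg.
apply: (opt_value_weights (w := fun k (g : 'I_4 -> 'I_2 * 'I_2) => weightAC k (g k).1 (g k).2)).
- by move=> g; apply: eq_bigr => k _; rewrite pAC_sigma.
- by move=> k g; apply: weightAC_le.
- by exists (fun k : 'I_4 => (ord0, flag_Psim k)); case=> [[|[|[|[|k]]]] ?].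
Qed.

Theorem mainTheorem4 :
  (* case 14: complete Bell-state measurement by B *)
  ((forall x y z a b c,
       pABC rho_tilde B14 x y z a b c = pABC rho_true B14 x y z a b c)
   /\ opt_value (guessABC B14 ord0) (3%:R / 8%:R)
   /\ opt_value guessAC (3%:R / 8%:R))
  /\
  (* case 22: B measures B_y = (1-y) sz(x)sz + y sx(x)sx *)
  ((forall x y z a b c,
       pABC rho_tilde B22 x y z a b c = pABC rho_true B22 x y z a b c)
   /\ opt_value (guessABC B22 0) (3%:R / 8%:R)
   /\ opt_value guessAC (3%:R / 8%:R)).
Proof.
split; split; [exact: pABC_rho_tilde_B14 | | exact: pABC_rho_tilde_B22 |].
- by split; [exact: opt_guessABC_B14 | exact: opt_guessAC].
- by split; [exact: opt_guessABC_B22 | exact: opt_guessAC].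
Qed.
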